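(* Let $i\ge 2$ and let $c_0,\dots,c_{i-1}$ be the vertices of a cycle, each with a positive weight $w(c_j)$. Run the following procedure (BalanceInCycle): initialize $b_{OPT}\gets 0$, a queue $Q_1$ empty and a queue $Q_2$ containing $c_0,c_1,\dots,c_{i-1}$ in this order (head $c_0$). Repeat the following iteration until $c_0$ becomes the head of $Q_1$ for the second time: update $b_{OPT}\gets\max\{b_{OPT},\min(w(Q_1),w(Q_2))\}$; then, if $w(Q_1)>w(Q_2)$, dequeue the head of $Q_1$ and append it to the tail of $Q_2$, otherwise dequeue the head of $Q_2$ and append it to the tail of $Q_1$. Then each vertex $c_j$ of the cycle is dequeued from $Q_1$ at least once during the procedure.
   Context: $w(Q)$ denotes the sum of the weights of the elements currently in queue $Q$. Queues are FIFO: elements are appended at the tail and removed at the head. *)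

From mathcomp Require Import all_boot all_order all_algebra.
Set Implicit Arguments. Unset Strict Implicit. Unset Printing Implicit Defensive.
Import Order.TTheory GRing.Theory Num.Theory.
Local Open Scope ring_scope.

(* Vertices c_0,...,c_{i-1} are represented by the naturals 0,...,i-1;
   a queue is a seq nat whose head (first element) is the head of the queue. *)

Definition wQ (R : numDomainType) (w : nat -> R) (q : seq nat) : R :=
  \sum_(x <- q) w x.

(* one iteration of BalanceInCycle on the pair (Q1, Q2)
   (the b_OPT update does not influence the queues) *)
Definition bal_step (R : numDomainType) (w : nat -> R) (s : seq nat * seq nat)
  : seq nat * seq nat :=
  let: (q1, q2) := s in
  if wQ w q2 < wQ w q1 then (behead q1, rcons q2 (head 0%N q1))
  else (rcons q1 (head 0%N q2), behead q2).

Definition bal_state (R : numDomainType) (w : nat -> R) (i k : nat) :=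
  iter k (bal_step w) ([::], iota 0 i).

(* c_0 becomes the head of Q1 at time t (i.e. as a result of iteration t-1) *)
Definition becomes_head (R : numDomainType) (w : nat -> R) (i t : nat) : bool :=
  [&& (0 < t)%N, ohead (bal_state w i t).1 == Some 0%N
    & ohead (bal_state w i t.-1).1 != Some 0%N].

(* iteration k (performed on state k) is executed by the procedure:
   c_0 has become head of Q1 fewer than two times at times 1..k *)
Definition executed (R : numDomainType) (w : nat -> R) (i k : nat) : bool :=
  (count (becomes_head w i) (iota 1 k) < 2)%N.

Definition dequeues_Q1 (R : numDomainType) (w : nat -> R) (i k j : nat) : bool :=
  let s := bal_state w i k in
  (wQ w s.2 < wQ w s.1) && (ohead s.1 == Some j).

From mathcomp Require Import all_boot all_order all_algebra.
From mathcomp Require Import zify.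
Import Order.TTheory GRing.Theory Num.Theory.
Local Open Scope ring_scope.

(** The two queues are always complementary arcs of the cycle: Q1 = c_a, ..., c_(a+l-1)
    and Q2 = c_(a+l), ..., c_(a+i-1) (indices mod i), where a counts the dequeues
    from Q1 so far and 2a + l is the number of iterations.  Positive weights keep
    the procedure from dequeuing an empty queue, so l stays in [0, i] and a grows
    without bound in unit steps.  Hence a passes through every j < i, and the
    iteration raising it from j to j+1 dequeues c_j from Q1.  Up to that point
    a < i, so c_0 can only have become the head of Q1 once, at the first step. *)

Lemma discrete_ivt (f : nat -> nat) (j n : nat) :
  (forall k, f k.+1 <= (f k).+1)%N -> (f 0 <= j < f n)%N ->
  exists k, f k = j /\ f k.+1 = j.+1.
Proof.
move=> f_step; elim: n => [|n IHn] /andP[f0_le lt_fn]; first by lia.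
have [lt_jfn | le_fnj] := ltnP j (f n); first by apply: IHn; rewrite f0_le.
by exists n; have := f_step n; lia.
Qed.

Section BalanceInCycle.

Context {R : numDomainType} (w : nat -> R) (i : nat).
Hypothesis i_gt0 : (0 < i)%N.
Hypothesis w_gt0 : forall j, (j < i)%N -> 0 < w j.

Definition arc (a n : nat) : seq nat := [seq (x %% i)%N | x <- iota a n].

Definition arcs (p : nat * nat) : seq nat * seq nat :=
  (arc p.1 p.2, arc (p.1 + p.2) (i - p.2)).

Definition pops_Q1 (s : seq nat * seq nat) : bool := wQ w s.2 < wQ w s.1.

Definition arc_step (p : nat * nat) : nat * nat :=
  if pops_Q1 (arcs p) then (p.1.+1, p.2.-1) else (p.1, p.2.+1).

Definition arc_state (k : nat) : nat * nat := iter k arc_step (0, 0)%N.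

Definition npop (k : nat) : nat := (arc_state k).1.

Lemma arc_rcons a n : rcons (arc a n) ((a + n) %% i)%N = arc a n.+1.
Proof. by rewrite /arc -addn1 iotaD map_cat cats1. Qed.

Lemma ohead_arc a n : ohead (arc a n) = if n is 0 then None else Some (a %% i)%N.
Proof. by case: n. Qed.

Lemma wQ_arc_ge0 a n : 0 <= wQ w (arc a n).
Proof.
rewrite /wQ big_map; apply: sumr_ge0 => x _.
by apply/ltW/w_gt0; rewrite ltn_pmod.
Qed.

Lemma wQ_arc_gt0 a n : (0 < n)%N -> 0 < wQ w (arc a n).
Proof.
case: n => // n _; rewrite /wQ /arc /= big_cons.
by rewrite ltr_pwDl ?w_gt0 ?ltn_pmod //; apply: wQ_arc_ge0.
Qed.

Lemma pops_arcs_gt0 a l : pops_Q1 (arcs (a, l)) -> (0 < l)%N.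
Proof.
case: l => //; rewrite /pops_Q1 /= {2}/wQ big_nil.
by rewrite le_gtF // wQ_arc_ge0.
Qed.

Lemma pushes_arcs_lt a l : (l <= i)%N -> ~~ pops_Q1 (arcs (a, l)) -> (l < i)%N.
Proof.
rewrite leq_eqVlt => /orP[/eqP-> | //].
by rewrite /pops_Q1 /= subnn /wQ big_nil wQ_arc_gt0.
Qed.

Lemma bal_step_arcs a l :
  (l <= i)%N -> bal_step w (arcs (a, l)) = arcs (arc_step (a, l)).
Proof.
move=> le_li; rewrite /bal_step /arc_step /pops_Q1 /=; case: ifP => pops /=.
  have := pops_arcs_gt0 a l pops; case: l pops le_li => // l _ lt_li _.
  have -> : head 0%N (arc a l.+1) = ((a + l.+1 + (i - l.+1)) %% i)%N.
    by rewrite /= -modnDr; congr (_ %% _)%N; lia.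
  by rewrite arc_rcons /arcs /=; congr (_, arc _ _); lia.
have lt_li := pushes_arcs_lt a l le_li (negbT pops).
rewrite /arcs /= [(i - l)%N](_ : _ = (i - l.+1).+1)%N; last by lia.
by rewrite arc_rcons addnS.
Qed.

Lemma arc_state_inv k :
  ((arc_state k).2 <= i)%N /\ (2 * npop k + (arc_state k).2 = k)%N.
Proof.
rewrite /npop; elim: k => [|k]; first by [].
rewrite /arc_state iterS; case: (iter k _ _) => a l /= [le_li <-].
rewrite /arc_step /=; case: ifP => [/pops_arcs_gt0 | /negbT/(pushes_arcs_lt a l le_li)];
  rewrite /=; lia.
Qed.

Lemma bal_stateE k : bal_state w i k = arcs (arc_state k).
Proof.
elim: k => [|k IHk].
  rewrite /bal_state /arcs /= subn0; congr (_, _).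
  by rewrite /arc map_id_in // => x; rewrite mem_iota => /andP[_ /modn_small].
have [le_li _] := arc_state_inv k.
rewrite /bal_state iterS -/(bal_state w i k) IHk /arc_state iterS -/(arc_state k).
by case: (arc_state k) le_li => a l; apply: bal_step_arcs.
Qed.

Lemma npopS k : npop k.+1 = (npop k + pops_Q1 (bal_state w i k))%N.
Proof.
rewrite /npop {1}/arc_state iterS -/(arc_state k) bal_stateE /arc_step.
by case: ifP => _ /=; rewrite ?addn0 ?addn1.
Qed.

Lemma npop_homo : {homo npop : m n / m <= n}%N.
Proof.
by apply: homo_leq => [//|? ? ?|k]; [apply: leq_trans | rewrite npopS leq_addr].
Qed.

Lemma npopS_le k : (npop k.+1 <= (npop k).+1)%N.
Proof. by rewrite npopS -[(npop k).+1]addn1 leq_add2l leq_b1. Qed.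

Lemma npop_lb k : (k <= 2 * npop k + i)%N.
Proof. by have [le_li time] := arc_state_inv k; lia. Qed.

Lemma ohead_Q1 k : ohead (bal_state w i k).1 =
  if (arc_state k).2 is 0 then None else Some (npop k %% i)%N.
Proof. by rewrite bal_stateE ohead_arc. Qed.

Lemma ohead_Q1_pops k :
  pops_Q1 (bal_state w i k) -> ohead (bal_state w i k).1 = Some (npop k %% i)%N.
Proof.
rewrite ohead_Q1 {1}bal_stateE.
by case: (arc_state k) => a [|l] //= /pops_arcs_gt0.
Qed.

Lemma becomes_head_early t : (npop t < i)%N -> becomes_head w i t -> t = 1%N.
Proof.
case: t => // s lt_npop_i; rewrite /becomes_head !ohead_Q1 succnK /=.
have := npop_homo _ _ (leqnSn s); have [_ time] := arc_state_inv s.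
case: (arc_state s.+1).2 => // _; rewrite (modn_small lt_npop_i) => le_npop.
case/andP=> /eqP[npop0]; case: (arc_state s).2 time => [|l] time; first by lia.
by rewrite (_ : npop s = 0)%N ?mod0n ?eqxx //; lia.
Qed.

Lemma executed_npop_lt k : (npop k < i)%N -> executed w i k.
Proof.
move=> lt_npop_i; rewrite /executed -size_filter ltnS.
apply: (@uniq_leq_size _ _ [:: 1%N]); first by rewrite filter_uniq ?iota_uniq.
move=> t; rewrite mem_filter mem_iota inE => /and3P[head_t _ le_tk].
apply/eqP; apply: (becomes_head_early t _ head_t).
by rewrite (leq_ltn_trans _ lt_npop_i) // npop_homo // -ltnS.
Qed.

Lemma dequeues_Q1_npopS k :
  npop k.+1 = (npop k).+1 -> dequeues_Q1 w i k (npop k %% i)%N.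
Proof.
rewrite npopS -addn1 => /eqP; rewrite eqn_add2l eqb1 => pops.
by apply/andP; split; last rewrite ohead_Q1_pops.
Qed.

End BalanceInCycle.

Theorem lemma4 (R : realFieldType) (i : nat) (w : nat -> R) :
  (2 <= i)%N ->
  (forall j, (j < i)%N -> 0 < w j) ->
  forall j, (j < i)%N ->
    exists k, executed w i k /\ dequeues_Q1 w i k j.
Proof.
move=> le2i w_gt0 j lt_ji; have i_gt0 : (0 < i)%N by lia.
have [k [npop_k npop_Sk]] : exists k, npop w i k = j /\ npop w i k.+1 = j.+1.
  apply: (@discrete_ivt _ j (3 * i)); first exact: npopS_le.
  by apply/andP; split; last by have := npop_lb w i i_gt0 w_gt0 (3 * i); lia.
exists k; split; first by apply: executed_npop_lt; rewrite ?npop_k.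
rewrite -(modn_small lt_ji) -npop_k.
by apply: dequeues_Q1_npopS; rewrite ?npop_k.
Qed.
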